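(* Let $n\ge2$, $p\in(1,2)\cup(2,\infty)$ and $\gamma<\gamma_{n,p}:=\min\{p+\frac{n}{n-1},\,3+\frac{p-1}{n-1}\}$. Let $\Omega\subset\mathbb{R}^n$ be a domain, $u$ a weak solution of $\operatorname{div}(|Du|^{p-2}Du)=0$ in $\Omega$, $U\Subset\Omega$ a smooth domain, $\varepsilon\in(0,1]$, and let $u^\varepsilon\in W^{1,p}(U)\cap C^0(\overline U)$ be the weak solution of $\operatorname{div}([|Du^\varepsilon|^2+\varepsilon]^{\frac{p-2}2}Du^\varepsilon)=0$ in $U$, $u^\varepsilon=u$ on $\partial U$ (which belongs to $C^\infty(U)$). Then for all $\phi\in C_c^\infty(U)$, $$\int_U\frac{|D^2u^\varepsilon Du^\varepsilon|^2}{|Du^\varepsilon|^2+\varepsilon}[|Du^\varepsilon|^2+\varepsilon]^{\frac{p-\gamma}2}\phi^2\,dx+\int_U(\Delta u^\varepsilon)^2[|Du^\varepsilon|^2+\varepsilon]^{\frac{p-\gamma}2}\phi^2\,dx\le C(n,p,\gamma)\int_U[|Du^\varepsilon|^2+\varepsilon]^{\frac{p-\gamma+2}2}|D\phi|^2\,dx,$$ with $C(n,p,\gamma)$ depending only on $n,p,\gamma$. *)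

From Stdlib Require Import Reals.
From Coquelicot Require Import Coquelicot.
From mathcomp Require Import ssreflect ssrfun ssrbool eqtype ssrnat seq fintype bigop.

Set Implicit Arguments.
Unset Strict Implicit.

Local Open Scope R_scope.

Definition Pt (n : nat) := 'I_n -> R.

Definition upd (n : nat) (x : Pt n) (i : 'I_n) (t : R) : Pt n :=
  fun j => if j == i then t else x j.

Definition partial (n : nat) (i : 'I_n) (f : Pt n -> R) (x : Pt n) : R :=
  Derive (fun t => f (upd x i t)) (x i).

Fixpoint iter_partial (n : nat) (l : seq 'I_n) (f : Pt n -> R) : Pt n -> R :=
  match l with
  | [::] => f
  | i :: l' => partial i (iter_partial l' f)
  end.

Definition sumR (n : nat) (F : 'I_n -> R) : R := \big[Rplus/0]_(i < n) F i.

Definition norm2 (n : nat) (v : 'I_n -> R) : R := sumR (fun i => v i * v i).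

Definition grad (n : nat) (f : Pt n -> R) (x : Pt n) : 'I_n -> R :=
  fun i => partial i f x.

Definition hess (n : nat) (f : Pt n -> R) (x : Pt n) (i j : 'I_n) : R :=
  partial i (partial j f) x.

Definition laplacian (n : nat) (f : Pt n -> R) (x : Pt n) : R :=
  sumR (fun i => hess f x i i).

Definition hess_grad (n : nat) (f : Pt n -> R) (x : Pt n) : 'I_n -> R :=
  fun i => sumR (fun j => hess f x i j * partial j f x).

Definition near_pt (n : nat) (x y : Pt n) (d : R) : Prop :=
  forall i, Rabs (y i - x i) < d.

Definition open_Rn (n : nat) (U : Pt n -> Prop) : Prop :=
  forall x, U x -> exists d, 0 < d /\ forall y, near_pt x y d -> U y.

Definition bounded_Rn (n : nat) (U : Pt n -> Prop) : Prop :=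
  exists M, forall x, U x -> forall i, Rabs (x i) <= M.

Definition cont_at (n : nat) (f : Pt n -> R) (x : Pt n) : Prop :=
  forall eps, 0 < eps -> exists d, 0 < d /\
    forall y, near_pt x y d -> Rabs (f y - f x) < eps.

Definition smooth_on (n : nat) (U : Pt n -> Prop) (f : Pt n -> R) : Prop :=
  forall (l : seq 'I_n) (x : Pt n), U x ->
    cont_at (iter_partial l f) x /\
    forall i : 'I_n, ex_derive (fun t => iter_partial l f (upd x i t)) (x i).

(* the support of phi is a compact subset of the open set U:
   {phi <> 0} is bounded and stays at (sup-)distance >= d > 0 from the
   complement of U. *)
Definition compact_support_in (n : nat) (U : Pt n -> Prop) (phi : Pt n -> R) : Prop :=
  exists M d, 0 < d /\ forall x, phi x <> 0 ->
    (forall i, Rabs (x i) <= M) /\ forall y, near_pt x y d -> U y.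

Definition test_fun (n : nat) (U : Pt n -> Prop) (phi : Pt n -> R) : Prop :=
  smooth_on (fun _ => True) phi /\ compact_support_in U phi.

Definition ext_pt (k : nat) (y : Pt k) (t : R) : Pt k.+1 :=
  fun j => match unlift ord_max j with Some j' => y j' | None => t end.

Fixpoint box_int (n : nat) (M : R) : (Pt n -> R) -> R :=
  match n return (Pt n -> R) -> R with
  | 0 => fun f => f (fun _ => 0)
  | k.+1 => fun f => RInt (fun t => box_int M (fun y : Pt k => f (ext_pt y t))) (- M) M
  end.

Definition reg_plap_sol (n : nat) (p eps : R) (U : Pt n -> Prop) (v : Pt n -> R) : Prop :=
  forall x, U x ->
    sumR (fun i => partial i
      (fun y => Rpower (norm2 (grad v y) + eps) ((p - 2) / 2) * partial i v y) x) = 0.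

Definition gamma_np (n : nat) (p : R) : R :=
  Rmin (p + INR n / (INR n - 1)) (3 + (p - 1) / (INR n - 1)).

From HB Require Import structures.
From Stdlib Require Import Reals Lra Psatz FunctionalExtensionality Classical ClassicalEpsilon.
From Coquelicot Require Import Coquelicot.
From mathcomp Require Import ssreflect ssrfun ssrbool eqtype ssrnat seq fintype bigop.

Set Implicit Arguments.
Unset Strict Implicit.

Local Open Scope R_scope.

(* Let a := |Dv|^2 + eps and w := a^((p - gamma)/2).  As phi has compact support, the
   integral of the divergence of (Δv Dv - D^2v Dv) w phi^2 vanishes, and pointwise this
   divergence equals
     ((Δv)^2 - |D^2v|^2) w phi^2 + (p - gamma) (w/a) phi^2 (Δv <Dv, D^2v Dv> - |D^2v Dv|^2)
     + 2 w phi (Δv <Dv, Dphi> - <D^2v Dv, Dphi>).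
   The equation in nondivergence form, a Δv = -(p - 2) <Dv, D^2v Dv>, and a lower bound for
   the norm of a symmetric matrix in terms of its trace and of its action on Dv show that
   minus the first two terms dominate c (|D^2v Dv|^2 / a + (Δv)^2) w phi^2 with c > 0,
   exactly when gamma < gamma_{n,p}.  Young's inequality absorbs the last term at the
   price of a^((p - gamma)/2 + 1) |Dphi|^2. *)

HB.instance Definition _ := Monoid.isComLaw.Build R 0 Rplus
  (fun x y z => esym (Rplus_assoc x y z)) Rplus_comm Rplus_0_l.
HB.instance Definition _ := Monoid.isMulLaw.Build R 0 Rmult Rmult_0_l Rmult_0_r.
HB.instance Definition _ :=
  Monoid.isAddLaw.Build R Rmult Rplus Rmult_plus_distr_r Rmult_plus_distr_l.

Section Sums.
Variable n : nat.
Implicit Types (F G : 'I_n -> R) (a b : 'I_n -> R).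

Lemma eq_sumR F G : (forall i, F i = G i) -> sumR F = sumR G.
Proof. by move=> FG; apply: eq_bigr => i _. Qed.

Lemma sumRD F G : sumR (fun i => F i + G i) = sumR F + sumR G.
Proof. exact: big_split. Qed.

Lemma sumR_mull c F : sumR (fun i => c * F i) = c * sumR F.
Proof. by rewrite /sumR big_distrr. Qed.

Lemma sumR_mulr c F : sumR (fun i => F i * c) = sumR F * c.
Proof. by rewrite /sumR big_distrl. Qed.

Lemma sumR0 : sumR (fun _ : 'I_n => 0) = 0.
Proof. exact: big1. Qed.

Lemma sumR1 : sumR (fun _ : 'I_n => 1) = INR n.
Proof.
rewrite /sumR big_const_ord; elim: n => //= k ->.
by case: k => [|k]; rewrite /= ?Rplus_0_r // Rplus_comm.
Qed.

Lemma sumR_ge0 F : (forall i, 0 <= F i) -> 0 <= sumR F.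
Proof. by move=> F0; apply: (big_ind (fun x => 0 <= x)) => //; [lra | move=> *; lra]. Qed.

Lemma exchange_sumR (F : 'I_n -> 'I_n -> R) :
  sumR (fun i => sumR (fun j => F i j)) = sumR (fun j => sumR (fun i => F i j)).
Proof. exact: exchange_big. Qed.

Lemma sumR_kronecker F i : sumR (fun j => F j * (if i == j then 1 else 0)) = F i.
Proof.
rewrite /sumR (bigD1 i) //= eqxx big1 ?Rmult_1_r ?Rplus_0_r // => j /negbTE.
by rewrite eq_sym => ->; rewrite Rmult_0_r.
Qed.

Lemma norm2_ge0 a : 0 <= norm2 a.
Proof. by apply: sumR_ge0 => i; apply: Rle_0_sqr. Qed.

Lemma norm2_eq0 a : norm2 a = 0 -> forall i, a i = 0.
Proof.
move=> a0 i; have: a i * a i <= norm2 a.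
  rewrite /norm2 /sumR (bigD1 i) //= -[X in X <= _]Rplus_0_r.
  apply: Rplus_le_compat_l; apply: (big_ind (fun x => 0 <= x)) => [|x y|j _];
    [lra | lra | exact: Rle_0_sqr].
rewrite a0 => h; apply: Rsqr_0_uniq; apply: Rle_antisym => //; exact: Rle_0_sqr.
Qed.

Definition dsum (F : 'I_n -> 'I_n -> R) := sumR (fun i => sumR (fun j => F i j)).

Lemma eq_dsum (F G : 'I_n -> 'I_n -> R) :
  (forall i j, F i j = G i j) -> dsum F = dsum G.
Proof. by move=> FG; apply: eq_sumR => i; apply: eq_sumR => j. Qed.

Lemma dsumD (F G : 'I_n -> 'I_n -> R) :
  dsum (fun i j => F i j + G i j) = dsum F + dsum G.
Proof. by rewrite /dsum -sumRD; apply: eq_sumR => i; apply: sumRD. Qed.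

Lemma dsum_mull c (F : 'I_n -> 'I_n -> R) :
  dsum (fun i j => c * F i j) = c * dsum F.
Proof. by rewrite /dsum -sumR_mull; apply: eq_sumR => i; apply: sumR_mull. Qed.

Lemma dsum_prod a b : dsum (fun i j => a i * b j) = sumR a * sumR b.
Proof. by rewrite /dsum -sumR_mulr; apply: eq_sumR => i; apply: sumR_mull. Qed.

Lemma dsum_ge0 (F : 'I_n -> 'I_n -> R) : (forall i j, 0 <= F i j) -> 0 <= dsum F.
Proof. by move=> F0; apply: sumR_ge0 => i; apply: sumR_ge0. Qed.

Lemma cauchy_schwarz a b :
  sumR (fun i => a i * b i) * sumR (fun i => a i * b i) <= norm2 a * norm2 b.
Proof.
have := dsum_ge0 (fun i j => pow2_ge_0 (a i * b j - a j * b i)).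
have -> : dsum (fun i j => (a i * b j - a j * b i) ^ 2) =
  dsum (fun i j => (a i * a i) * (b j * b j)) + dsum (fun i j => (b i * b i) * (a j * a j))
  + (-2) * dsum (fun i j => (a i * b i) * (a j * b j)).
  by rewrite -dsum_mull -!dsumD; apply: eq_dsum => i j; ring.
rewrite !dsum_prod -/(norm2 a) -/(norm2 b); lra.
Qed.

End Sums.

Lemma INR_pred_ge1 n : (2 <= n)%nat -> 1 <= INR n - 1.
Proof. by move=> n2; have := le_INR 2 n (elimT leP n2); rewrite /=; lra. Qed.

Section SymmetricMatrixBound.
Variables (n : nat) (A : 'I_n -> 'I_n -> R) (g : 'I_n -> R).
Hypothesis A_sym : forall i j, A i j = A j i.

Let Ag i := sumR (fun j => A i j * g j).
Let t := norm2 g.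
Let V := norm2 Ag.
Let P := sumR (fun i => g i * Ag i).
Let L := sumR (fun i => A i i).
Let Agg i j := Ag i * g j.
Let gAg i j := g i * Ag j.
Let gg i j := g i * g j.
Let I (i j : 'I_n) := if i == j then 1 else 0.

Lemma frob_A_Agg : dsum (fun i j => A i j * Agg i j) = V.
Proof.
apply: eq_sumR => i; rewrite /Agg -sumR_mull.
by apply: eq_sumR => j; ring.
Qed.

Lemma frob_A_gAg : dsum (fun i j => A i j * gAg i j) = V.
Proof.
rewrite /dsum exchange_sumR -frob_A_Agg; apply: eq_sumR => i; apply: eq_sumR => j.
by rewrite /Agg /gAg A_sym; ring.
Qed.

Lemma frob_A_gg : dsum (fun i j => A i j * gg i j) = P.
Proof.
apply: eq_sumR => i; rewrite /gg -sumR_mull.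
by apply: eq_sumR => j; ring.
Qed.

Lemma frob_A_I : dsum (fun i j => A i j * I i j) = L.
Proof. by apply: eq_sumR => i; rewrite /I sumR_kronecker. Qed.

Lemma frob_I_I : dsum (fun i j => I i j * I i j) = INR n.
Proof.
rewrite -sumR1; apply: eq_sumR => i.
rewrite -[RHS](sumR_kronecker (fun _ => 1) i); apply: eq_sumR => j.
by rewrite /I; case: (i == j); ring.
Qed.

Lemma frob_outer (a b c d : 'I_n -> R) :
  dsum (fun i j => (a i * b j) * (c i * d j)) =
  sumR (fun i => a i * c i) * sumR (fun j => b j * d j).
Proof. by rewrite -dsum_prod; apply: eq_dsum => i j; ring. Qed.

Lemma frob_outer_I (a b : 'I_n -> R) :
  dsum (fun i j => (a i * b j) * I i j) = sumR (fun i => a i * b i).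
Proof.
apply: eq_sumR => i; rewrite -[RHS](sumR_kronecker (fun j => a i * b j) i).
by apply: eq_sumR => j; rewrite /I.
Qed.

Lemma Ag_g : sumR (fun i => Ag i * g i) = P.
Proof. by apply: eq_sumR => i; rewrite Rmult_comm. Qed.

(* Expand 0 <= |B|^2 for B := A - (Ag g^T + g Ag^T)/t + c4 g g^T - c I, where
   c := (L - P/t)/(n - 1) and c4 := P/t^2 + c/t make the bound optimal. *)
Lemma sym_frobenius_lb : (2 <= n)%nat -> 0 < t ->
  2 * V / t - P * P / (t * t) + (L - P / t) ^ 2 / (INR n - 1)
  <= dsum (fun i j => A i j * A i j).
Proof.
move=> n2 t_gt0.
have m1 := INR_pred_ge1 n2.
set H := dsum _; set m := INR n - 1 in m1 *.
set c := (L - P / t) / m.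
set c2 := - / t; set c4 := P / (t * t) + c / t; set c5 := - c.
have := dsum_ge0 (fun i j =>
  Rle_0_sqr (A i j + c2 * Agg i j + c2 * gAg i j + c4 * gg i j + c5 * I i j)).
have -> : dsum (fun i j =>
    Rsqr (A i j + c2 * Agg i j + c2 * gAg i j + c4 * gg i j + c5 * I i j)) =
  H + 2 * c2 * dsum (fun i j => A i j * Agg i j)
  + 2 * c2 * dsum (fun i j => A i j * gAg i j)
  + 2 * c4 * dsum (fun i j => A i j * gg i j) + 2 * c5 * dsum (fun i j => A i j * I i j)
  + c2 * c2 * dsum (fun i j => Agg i j * Agg i j)
  + 2 * c2 * c2 * dsum (fun i j => Agg i j * gAg i j)
  + c2 * c2 * dsum (fun i j => gAg i j * gAg i j)
  + 2 * c2 * c4 * dsum (fun i j => Agg i j * gg i j)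
  + 2 * c2 * c4 * dsum (fun i j => gAg i j * gg i j)
  + 2 * c2 * c5 * dsum (fun i j => Agg i j * I i j)
  + 2 * c2 * c5 * dsum (fun i j => gAg i j * I i j)
  + c4 * c4 * dsum (fun i j => gg i j * gg i j)
  + 2 * c4 * c5 * dsum (fun i j => gg i j * I i j)
  + c5 * c5 * dsum (fun i j => I i j * I i j).
  by rewrite -!dsum_mull -!dsumD; apply: eq_dsum => i j; rewrite /Rsqr; ring.
rewrite frob_A_Agg frob_A_gAg frob_A_gg frob_A_I frob_I_I !frob_outer !frob_outer_I.
rewrite Ag_g -/P.
suff -> : H + 2 * c2 * V + 2 * c2 * V + 2 * c4 * P + 2 * c5 * L + c2 * c2 * (V * t)
  + 2 * c2 * c2 * (P * P) + c2 * c2 * (t * V) + 2 * c2 * c4 * (P * t)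
  + 2 * c2 * c4 * (t * P) + 2 * c2 * c5 * P + 2 * c2 * c5 * P + c4 * c4 * (t * t)
  + 2 * c4 * c5 * t + c5 * c5 * INR n
  = H - (2 * V / t - P * P / (t * t) + (L - P / t) ^ 2 / m) by lra.
have -> : INR n = m + 1 by rewrite /m; ring.
rewrite /c5 /c4 /c2 /c; clearbody m; field; split; lra.
Qed.
End SymmetricMatrixBound.

Lemma quadratic_endpoint_le a b c s : 0 <= s <= 1 ->
  (0 < a -> b < 0 -> b + 2 * a <= 0) ->
  c <= c + s * b + s ^ 2 * a \/ c + b + a <= c + s * b + s ^ 2 * a.
Proof.
move=> [s0 s1] vertex.
have [a0|a0] := Rle_or_lt a 0.
  have ss : s * (s - 1) <= 0 by nra.
  have convex : (1 - s) * c + s * (c + b + a) <= c + s * b + s ^ 2 * a.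
    have : 0 <= a * (s * (s - 1)) by nra.
    nra.
  by have [cle|clt] := Rle_or_lt c (c + b + a); [left | right]; nra.
have [b0|b0] := Rle_or_lt 0 b; first by left; nra.
right; have := vertex a0 b0 => vtx.
have : 0 <= (1 - s) * (- (b + (s + 1) * a)) by apply: Rmult_le_pos; nra.
nra.
Qed.

(* With m = n - 1, k = p - 2 and g = p - gamma, [coer m k g s] is the coercivity constant
   in the direction of Dv when |Dv|^2 = s a; [0 < coer m k g 1] is the condition
   gamma < 3 + (p - 1)/(n - 1), and [- (m + 1) < g m] is gamma < p + n/(n - 1). *)
Definition coer (m k g s : R) := 1 + (1 + k * s) ^ 2 / m - k ^ 2 * s ^ 2 + g * s * (1 + k * s).

Lemma coer_min_ends m k g s : 1 <= m -> -1 < k -> -(m + 1) < g * m -> 0 <= s <= 1 ->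
  Rmin (coer m k g 0) (coer m k g 1) <= coer m k g s.
Proof.
move=> m1 k1 gm s01.
set a := k * (g * m - k * (m - 1)); set b := g * m + 2 * k.
have E x : coer m k g x = (m + 1 + x * b + x ^ 2 * a) / m.
  by rewrite /coer /a /b; field; lra.
have vertex : 0 < a -> b < 0 -> b + 2 * a <= 0.
  move=> a0 b0; have k0 : k < 0.
    have [k0|k0] := Rle_or_lt 0 k; last done.
    by have [k_gt0|<-] := Rle_lt_or_eq_dec 0 k k0; rewrite /a /b in a0 b0; nra.
  have gmk : g * m - k * (m - 1) < 0 by rewrite /a in a0; nra.
  have [k2|k2] := Rle_or_lt (- k) (1 / 2); rewrite /a /b; nra.
have m_inv : 0 < / m by apply: Rinv_0_lt_compat; lra.
rewrite !E; case: (quadratic_endpoint_le (m + 1) s01 vertex) => h.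
- apply: Rle_trans (Rmin_l _ _) _; apply: Rmult_le_compat_r; lra.
- apply: Rle_trans (Rmin_r _ _) _; apply: Rmult_le_compat_r; lra.
Qed.

Definition coer_min m k g := Rmin (Rmin (coer m k g 0) (coer m k g 1)) (Rmin 2 (2 + g)).
Definition coer_const m k g := coer_min m k g / (1 + k ^ 2).

Lemma coer_min_gt0 m k g : 1 <= m -> -(m + 1) < g * m -> 0 < coer m k g 1 ->
  0 < coer_min m k g.
Proof.
move=> m1 gm c1.
have minv : 0 < 1 / m by apply: Rdiv_lt_0_compat; lra.
have g2 : -2 < g by apply: (Rmult_lt_reg_r m); lra.
have c0 : coer m k g 0 = 1 + 1 / m by rewrite /coer; field; lra.
by rewrite /coer_min c0; repeat apply: Rmin_glb_lt; lra.
Qed.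

Lemma coer_const_gt0 m k g : 1 <= m -> -(m + 1) < g * m -> 0 < coer m k g 1 ->
  0 < coer_const m k g.
Proof.
move=> m1 gm c1; apply: Rdiv_lt_0_compat; first exact: coer_min_gt0.
by have := pow2_ge_0 k; lra.
Qed.

Lemma young_cross c x S Z Y : 0 < c -> 0 <= S -> 0 <= Y -> Z ^ 2 <= 2 * S * Y ->
  2 * x * Z <= c / 2 * x ^ 2 * S + 4 / c * Y.
Proof.
move=> c0 S0 Y0 ZSY.
set u := c / 2 * x ^ 2 * S; set y := 4 / c * Y.
have u0 : 0 <= u by rewrite /u; apply: Rmult_le_pos; [apply: Rmult_le_pos; [lra | nra] | done].
have y0 : 0 <= y by rewrite /y; apply: Rmult_le_pos => //; apply: Rdiv_le_0_compat; lra.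
have uy : u * y = 2 * x ^ 2 * (S * Y) by rewrite /u /y; field; lra.
have sq : (2 * x * Z) ^ 2 <= (u + y) ^ 2.
  have : x ^ 2 * Z ^ 2 <= x ^ 2 * (2 * S * Y) by apply: Rmult_le_compat_l => //; apply: pow2_ge_0.
  have := pow2_ge_0 (u - y); nra.
have [neg|pos] := Rle_or_lt (2 * x * Z) 0; first lra.
by apply: Rsqr_incr_0_var; rewrite /Rsqr; lra.
Qed.

Section Coercivity.
Variables (m k g : R).
Hypotheses (m1 : 1 <= m) (k1 : -1 < k) (gm : -(m + 1) < g * m) (c1 : 0 < coer m k g 1).

Lemma coercivity_normalized s al be H : 0 <= s <= 1 -> 0 <= be ->
  al ^ 2 + 2 * be + (al * (1 + k * s)) ^ 2 / m <= H ->
  coer_const m k g * (s * (al ^ 2 + be) + k ^ 2 * s ^ 2 * al ^ 2) <=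
  H - k ^ 2 * s ^ 2 * al ^ 2 + g * (k * s ^ 2 * al ^ 2 + s * (al ^ 2 + be)).
Proof.
move=> s01 be0 H_lb.
have mn_pos := coer_min_gt0 m1 gm c1.
have mn_coer : coer_min m k g <= coer m k g s.
  exact: Rle_trans (Rmin_l _ _) (coer_min_ends m1 k1 gm s01).
have mn_be : coer_min m k g <= 2 + g * s.
  have := Rmin_r (Rmin (coer m k g 0) (coer m k g 1)) (Rmin 2 (2 + g)).
  have := Rmin_l 2 (2 + g); have := Rmin_r 2 (2 + g).
  rewrite /coer_min; case: s01 => s0 s1; nra.
set mn := coer_min m k g in mn_pos mn_coer mn_be *.
have split_H : al ^ 2 * coer m k g s + be * (2 + g * s) <=
    H - k ^ 2 * s ^ 2 * al ^ 2 + g * (k * s ^ 2 * al ^ 2 + s * (al ^ 2 + be)).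
  suff -> : al ^ 2 * coer m k g s = al ^ 2 + (al * (1 + k * s)) ^ 2 / m
      - k ^ 2 * s ^ 2 * al ^ 2 + g * s * (1 + k * s) * al ^ 2 by lra.
  by rewrite /coer; field; lra.
have weights : s * (al ^ 2 + be) + k ^ 2 * s ^ 2 * al ^ 2 <= (1 + k ^ 2) * (al ^ 2 + be).
  case: s01 => s0 s1; have al2 := pow2_ge_0 al; have k2 := pow2_ge_0 k.
  have s2 : s ^ 2 <= 1 by nra.
  have : s ^ 2 * al ^ 2 <= al ^ 2 by nra.
  have : s * (al ^ 2 + be) <= al ^ 2 + be by nra.
  nra.
have k2 : 0 < 1 + k ^ 2 by have := pow2_ge_0 k; lra.
rewrite /coer_const -/mn.
apply: (Rle_trans _ (mn * (al ^ 2 + be))).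
  rewrite /Rdiv Rmult_assoc; apply: Rmult_le_compat_l; first lra.
  apply: (Rmult_le_reg_l (1 + k ^ 2)) => //; field_simplify; lra.
have := pow2_ge_0 al; nra.
Qed.

(* For t > 0 this is [coercivity_normalized] in the variables s = t / (t + eps),
   al = P / t and be = V / t - al^2, nonnegative by Cauchy-Schwarz. *)
Lemma pointwise_coercivity H L P V t eps :
  0 <= t -> 0 < eps -> 0 <= H -> (t + eps) * L = - k * P -> P * P <= t * V ->
  (t = 0 -> P = 0 /\ V = 0) ->
  (0 < t -> 2 * V / t - P * P / (t * t) + (L - P / t) ^ 2 / m <= H) ->
  coer_const m k g * (V / (t + eps) + L ^ 2) <= H - L ^ 2 - g * (L * P - V) / (t + eps).
Proof.
move=> t0 e0 H0 eqL CS Ht0 H_lb.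
have [t_gt0|t_eq0] := Rle_lt_or_eq_dec 0 t t0; last first.
  subst t; case: (Ht0 erefl) => P0 V0; subst P V; have -> : L = 0 by nra.
  have -> : 0 / (0 + eps) + 0 ^ 2 = 0 by field; lra.
  have -> : H - 0 ^ 2 - g * (0 * 0 - 0) / (0 + eps) = H by field; lra.
  by have := coer_const_gt0 m1 gm c1; nra.
set a := t + eps in eqL *; have a0 : 0 < a by rewrite /a; lra.
set s := t / a; set al := P / t; set be := V / t - al ^ 2.
have s01 : 0 <= s <= 1.
  rewrite /s; split; first by apply: Rmult_le_pos; [lra | apply/Rlt_le/Rinv_0_lt_compat].
  by apply: (Rmult_le_reg_r a) => //; rewrite /Rdiv Rmult_assoc Rinv_l /a; lra.
have eP : P = s * a * al by rewrite /s /al; field; lra.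
have eV : V = s * a * (al ^ 2 + be) by rewrite /s /be /al; field; lra.
have eL : L = - k * s * al by apply: (Rmult_eq_reg_l a); [rewrite eqL eP; ring | lra].
have be0 : 0 <= be.
  rewrite /be /al; have -> : (P / t) ^ 2 = P * P / t / t by field; lra.
  apply: Rge_le; apply: Rge_minus; apply: Rle_ge; rewrite /Rdiv.
  apply: Rmult_le_compat_r; first exact/Rlt_le/Rinv_0_lt_compat.
  by apply: (Rmult_le_reg_l t) => //; field_simplify; lra.
have := coercivity_normalized s01 be0 (H := H) (al := al).
have -> : al ^ 2 + 2 * be + (al * (1 + k * s)) ^ 2 / m =
    2 * V / t - P * P / (t * t) + (L - P / t) ^ 2 / m by rewrite eL /be /al /s; field; lra.
move=> /(_ (H_lb t_gt0)).
have -> : V / a + L ^ 2 = s * (al ^ 2 + be) + k ^ 2 * s ^ 2 * al ^ 2 by rewrite eL eV; field; lra.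
have -> : H - L ^ 2 - g * (L * P - V) / a =
  H - k ^ 2 * s ^ 2 * al ^ 2 + g * (k * s ^ 2 * al ^ 2 + s * (al ^ 2 + be)).
  by rewrite eL eP eV; field; lra.
done.
Qed.

Lemma pointwise_energy_bound H L P V t eps w ph X1 X2 Y :
  0 <= t -> 0 < eps -> 0 <= H -> (t + eps) * L = - k * P -> P * P <= t * V ->
  (t = 0 -> P = 0 /\ V = 0) ->
  (0 < t -> 2 * V / t - P * P / (t * t) + (L - P / t) ^ 2 / m <= H) ->
  0 <= V -> 0 < w -> 0 <= Y -> X1 * X1 <= t * Y -> X2 * X2 <= V * Y ->
  coer_const m k g / 2 * (V / (t + eps) * w * ph ^ 2 + L ^ 2 * w * ph ^ 2) <=
  - ((L ^ 2 - H) * w * ph ^ 2 + g * (w / (t + eps)) * ph ^ 2 * (L * P - V)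
     + 2 * w * ph * (L * X1 - X2)) + 4 / coer_const m k g * (w * (t + eps) * Y).
Proof.
move=> t0 e0 H0 eqL CS Ht0 H_lb V0 w0 Y0 X1Y X2Y.
have coer_lb := pointwise_coercivity t0 e0 H0 eqL CS Ht0 H_lb.
have c0 := coer_const_gt0 m1 gm c1.
set c := coer_const m k g in coer_lb c0 *.
set a := t + eps in coer_lb *; have a0 : 0 < a by rewrite /a; lra.
set S := V / a + L ^ 2.
have S0 : 0 <= S by rewrite /S; have := Rdiv_le_0_compat V a V0 a0; nra.
have cross : (L * X1 - X2) ^ 2 <= 2 * S * (a * Y).
  have -> : 2 * S * (a * Y) = 2 * L ^ 2 * (a * Y) + 2 * (V * Y) by rewrite /S; field; lra.
  have : L ^ 2 * (X1 * X1) <= L ^ 2 * (a * Y).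
    by apply: Rmult_le_compat_l; [apply: pow2_ge_0 | rewrite /a; nra].
  have := pow2_ge_0 (L * X1 + X2); nra.
have := young_cross ph c0 S0 (Rmult_le_pos _ _ (Rlt_le _ _ a0) Y0) cross.
have -> : c / 2 * (V / a * w * ph ^ 2 + L ^ 2 * w * ph ^ 2) = w * (c / 2 * ph ^ 2 * S).
  by rewrite /S; field; lra.
have -> : (L ^ 2 - H) * w * ph ^ 2 + g * (w / a) * ph ^ 2 * (L * P - V) =
   - (w * ph ^ 2) * (H - L ^ 2 - g * (L * P - V) / a) by field; lra.
have : w * ph ^ 2 * (c * S) <= w * ph ^ 2 * (H - L ^ 2 - g * (L * P - V) / a).
  by apply: Rmult_le_compat_l => //; have := pow2_ge_0 ph; nra.
move=> coer_w young.
have : w * (2 * ph * (L * X1 - X2)) <= w * (c / 2 * ph ^ 2 * S + 4 / c * (a * Y)).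
  by apply: Rmult_le_compat_l; lra.
nra.
Qed.

End Coercivity.

Lemma cont_atE k (f : Pt k -> R) x : cont_at f x <-> continuous f x.
Proof.
split=> [fx | /filterlim_locally fx eps e0].
  apply/filterlim_locally => eps; have [d [d0 Hd]] := fx eps (cond_pos eps).
  by exists (mkposreal d d0) => y; apply: Hd.
by have [d Hd] := fx (mkposreal eps e0); exists d; split; [exact: cond_pos | move=> y /Hd].
Qed.

Section RealContinuity.
Variable T : UniformSpace.
Implicit Types (f g : T -> R) (x : T).

Lemma continuous_Rplus f g x :
  continuous f x -> continuous g x -> continuous (fun y => f y + g y) x.
Proof. exact: continuous_plus. Qed.

Lemma continuous_Rminus f g x :
  continuous f x -> continuous g x -> continuous (fun y => f y - g y) x.
Proof. exact: continuous_minus. Qed.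

Lemma continuous_Rmult f g x :
  continuous f x -> continuous g x -> continuous (fun y => f y * g y) x.
Proof. exact: continuous_mult. Qed.

Lemma continuous_Rpower f r x :
  0 < f x -> continuous f x -> continuous (fun y => Rpower (f y) r) x.
Proof.
move=> fx0 fx; apply: (continuous_comp f (fun z => Rpower z r)) => //.
apply: ex_derive_continuous; exists (r * Rpower (f x) (r - 1)).
by apply/is_derive_Reals; apply: derivable_pt_lim_power.
Qed.

Lemma continuous_Rinv_comp f x : f x <> 0 -> continuous f x -> continuous (fun y => / f y) x.
Proof. by move=> fx0 fx; apply: (continuous_comp f Rinv) => //; apply: continuous_Rinv. Qed.

Lemma continuous_bigR m (F : 'I_m -> T -> R) (r : seq 'I_m) x :
  (forall l, continuous (F l) x) -> continuous (fun y => \big[Rplus/0]_(l <- r) F l y) x.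
Proof.
move=> F_cont; elim: r => [|l r IH].
  apply: (continuous_ext (fun _ => 0)); last exact: continuous_const.
  by move=> y; rewrite big_nil.
apply: (continuous_ext (fun y => F l y + \big[Rplus/0]_(l <- r) F l y)).
  by move=> y; rewrite big_cons.
exact: continuous_Rplus.
Qed.

Lemma continuous_sumR m (F : 'I_m -> T -> R) x :
  (forall l, continuous (F l) x) -> continuous (fun y => sumR (fun l => F l y)) x.
Proof. exact: continuous_bigR. Qed.

End RealContinuity.

Lemma continuous_ball (T U : UniformSpace) (f : T -> U -> R) z s :
  continuous (fun zs : T * U => f zs.1 zs.2) (z, s) ->
  forall eps : posreal, exists d : posreal, forall z' s',
    ball z d z' -> ball s d s' -> Rabs (f z' s' - f z s) < eps.
Proof.
move=> /filterlim_locally fzs eps; have [d Hd] := fzs eps.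
by exists d => z' s' hz hs; apply: (Hd (z', s')).
Qed.

Lemma continuous_section (T U : UniformSpace) (f : T -> U -> R) z s :
  continuous (fun zs : T * U => f zs.1 zs.2) (z, s) -> continuous (f z) s.
Proof.
move=> /continuous_ball fzs; apply/filterlim_locally => eps.
by have [d Hd] := fzs eps; exists d => s' hs; apply: Hd => //; apply: ball_center.
Qed.

(* G is uniformly continuous on {z} x [a, b] by compactness of [a, b]. *)
Lemma continuous_RInt_param (T : UniformSpace) (G : T -> R -> R) a b :
  (forall z s, continuous (fun zs : T * R => G zs.1 zs.2) (z, s)) ->
  forall z, continuous (fun z => RInt (G z) a b) z.
Proof.
move=> HG z; apply/filterlim_locally => eps.
set e := eps / (2 * (Rabs (b - a) + 1)).
have ba := Rabs_pos (b - a).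
have e0 : 0 < e by apply: Rdiv_lt_0_compat; [exact: cond_pos | lra].
pose delta s := projT1 (constructive_indefinite_description _
  (continuous_ball (HG z s) (mkposreal e e0))).
have Hdelta s := projT2 (constructive_indefinite_description _
  (continuous_ball (HG z s) (mkposreal e e0))).
have [d Hd] := compactness_value_1d (Rmin a b) (Rmax a b) delta.
exists d => z' hz.
have Gint z0 : ex_RInt (G z0) a b.
  by apply: ex_RInt_continuous => s _; apply: continuous_section.
have close s : Rmin a b <= s <= Rmax a b -> Rabs (G z' s - G z s) <= 2 * e.
  move=> /Hd s_near; apply: Rlt_le; apply: NNPP => far; apply: s_near => -[u [_ [su du]]].
  apply: far; rewrite -/(delta u) in su du.
  have h1 := Hdelta u z' s (ball_le _ _ _ du _ hz) su.
  have h2 := Hdelta u z s (ball_center _ _) su.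
  have := Rabs_triang (G z' s - G z u) (G z u - G z s).
  have -> : G z' s - G z u + (G z u - G z s) = G z' s - G z s by ring.
  by rewrite Rabs_minus_sym /= in h2; rewrite /= in h1; lra.
have := norm_RInt_le_const_abs (fun s => G z' s - G z s) a b _ (2 * e) close
  (RInt_correct _ _ _ (ex_RInt_minus _ _ _ _ (Gint z') (Gint z))).
rewrite RInt_minus // => bound.
apply: Rle_lt_trans bound _.
have -> : Rabs (b - a) * (2 * e) = eps * (Rabs (b - a) / (Rabs (b - a) + 1)).
  by rewrite /e; field; lra.
have : Rabs (b - a) / (Rabs (b - a) + 1) < 1.
  by apply: (Rmult_lt_reg_r (Rabs (b - a) + 1)); [lra | field_simplify; lra].
have := cond_pos eps; nra.
Qed.

Section Coordinates.
Variable k : nat.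
Implicit Types (x : Pt k) (i j : 'I_k).

Lemma upd_eq x i a : upd x i a i = a.
Proof. by rewrite /upd eqxx. Qed.

Lemma upd_neq x i j a : i != j -> upd x i a j = x j.
Proof. by rewrite /upd eq_sym => /negbTE ->. Qed.

Lemma upd_id x i : upd x i (x i) = x.
Proof. by apply: functional_extensionality => j; rewrite /upd; case: eqP => [->|]. Qed.

Lemma upd_upd x i a b : upd (upd x i a) i b = upd x i b.
Proof. by apply: functional_extensionality => j; rewrite /upd; case: (j == i). Qed.

Lemma upd_comm x i j a b : i != j -> upd (upd x i a) j b = upd (upd x j b) i a.
Proof.
move=> ij; apply: functional_extensionality => l; rewrite /upd.
by case: (eqVneq l j) => [->|_]; rewrite ?(negbTE ij) // eq_sym (negbTE ij).
Qed.

Lemma ball_upd x i t (d : R) : 0 < d -> Rabs (t - x i) < d -> ball x d (upd x i t).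
Proof.
move=> d0 xt j; rewrite /upd; case: eqP => [->|_] //.
by change (Rabs (x j - x j) < d); rewrite Rminus_diag Rabs_R0.
Qed.

End Coordinates.

Lemma ext_pt_lift k (y : Pt k) t j : ext_pt y t (lift ord_max j) = y j.
Proof. by rewrite /ext_pt liftK. Qed.

Lemma ext_pt_max k (y : Pt k) t : ext_pt y t ord_max = t.
Proof. by rewrite /ext_pt unlift_none. Qed.

Lemma upd_ext_pt_lift k (y : Pt k) s j t :
  upd (ext_pt y s) (lift ord_max j) t = ext_pt (upd y j t) s.
Proof.
apply: functional_extensionality => l; rewrite /upd /ext_pt.
case: unliftP => [l' ->|->]; first by rewrite (inj_eq (@lift_inj _ ord_max)).
by rewrite (negbTE (neq_lift _ _)).
Qed.

Lemma upd_ext_pt_max k (y : Pt k) s t : upd (ext_pt y s) ord_max t = ext_pt y t.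
Proof.
apply: functional_extensionality => l; rewrite /upd /ext_pt.
by case: unliftP => [l' ->|->]; rewrite ?eqxx // eq_sym (negbTE (neq_lift _ _)).
Qed.

Section PartialDerivatives.
Variable k : nat.
Implicit Types (f g : Pt k -> R) (x : Pt k) (i : 'I_k).

Definition is_partial i f x (d : R) := is_derive (fun t => f (upd x i t)) (x i) d.
Definition ex_partial i f x := ex_derive (fun t => f (upd x i t)) (x i).

Lemma is_partial_unique i f x d : is_partial i f x d -> partial i f x = d.
Proof. exact: is_derive_unique. Qed.

Lemma is_partial_ex i f x d : is_partial i f x d -> ex_partial i f x.
Proof. by exists d. Qed.

Lemma ex_partial_correct i f x : ex_partial i f x -> is_partial i f x (partial i f x).
Proof. exact: Derive_correct. Qed.

Lemma is_partial_ext i f g x d : (forall y, f y = g y) -> is_partial i f x d -> is_partial i g x d.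
Proof. by move=> fg; apply: is_derive_ext => t. Qed.

Lemma is_partial_const i (c : R) x : is_partial i (fun _ => c) x 0.
Proof. exact: is_derive_const. Qed.

Lemma is_partial_plus i f g x df dg : is_partial i f x df -> is_partial i g x dg ->
  is_partial i (fun y => f y + g y) x (df + dg).
Proof. exact: is_derive_plus. Qed.

Lemma is_partial_mult i f g x df dg : is_partial i f x df -> is_partial i g x dg ->
  is_partial i (fun y => f y * g y) x (df * g x + f x * dg).
Proof.
move=> fx gx; have := is_derive_mult _ _ (x i) _ _ fx gx Rmult_comm.
by rewrite upd_id.
Qed.

Lemma is_partial_Rpower i f x df r : 0 < f x -> is_partial i f x df ->
  is_partial i (fun y => Rpower (f y) r) x (r * Rpower (f x) (r - 1) * df).
Proof.
move=> fx0 fx; have pow : is_derive (fun z => Rpower z r) (f (upd x i (x i)))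
    (r * Rpower (f x) (r - 1)).
  by rewrite upd_id; apply/is_derive_Reals; apply: derivable_pt_lim_power.
have := is_derive_comp _ _ (x i) _ _ pow fx.
by rewrite /scal /= /mult /= Rmult_comm.
Qed.

Lemma is_partial_sum i m (F : 'I_m -> Pt k -> R) (D : 'I_m -> R) x :
  (forall l, is_partial i (F l) x (D l)) ->
  is_partial i (fun y => sumR (fun l => F l y)) x (sumR D).
Proof.
move=> FD; rewrite /sumR; elim: (index_enum _) => [|l r IH].
  rewrite big_nil; apply: (is_partial_ext (f := fun _ => 0)); last exact: is_partial_const.
  by move=> y; rewrite big_nil.
rewrite big_cons; apply: (is_partial_ext (f := fun y => F l y + \big[Rplus/0]_(l <- r) F l y)).
  by move=> y; rewrite big_cons.
exact: is_partial_plus.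
Qed.

End PartialDerivatives.

Lemma partial_lift k (h : Pt k.+1 -> R) j y s :
  partial (lift ord_max j) h (ext_pt y s) = partial j (fun y => h (ext_pt y s)) y.
Proof. by rewrite /partial ext_pt_lift; apply: Derive_ext => t; rewrite upd_ext_pt_lift. Qed.

Lemma partial_max k (h : Pt k.+1 -> R) y s :
  partial ord_max h (ext_pt y s) = Derive (fun t => h (ext_pt y t)) s.
Proof. by rewrite /partial ext_pt_max; apply: Derive_ext => t; rewrite upd_ext_pt_max. Qed.

Definition cont_everywhere k (f : Pt k -> R) := forall x, continuous f x.

Definition jointly_continuous (T : UniformSpace) k (f : T -> Pt k -> R) :=
  forall z y, continuous (fun zy : T * Pt k => f zy.1 zy.2) (z, y).

Lemma continuous_ext_pt (T : UniformSpace) k (Y : T -> Pt k) (S : T -> R) w :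
  continuous Y w -> continuous S w -> continuous (fun w => ext_pt (Y w) (S w)) w.
Proof.
move=> /filterlim_locally Yw /filterlim_locally Sw; apply/filterlim_locally => eps.
apply: filter_imp (filter_and _ _ (Yw eps) (Sw eps)) => w' [Yw' Sw'] j.
by rewrite /ext_pt; case: unliftP => [j' _|_]; [apply: Yw' | apply: Sw'].
Qed.

Lemma cont_everywhere_slice k (f : Pt k.+1 -> R) s :
  cont_everywhere f -> cont_everywhere (fun y => f (ext_pt y s)).
Proof.
move=> f_cont y; apply: (continuous_comp (fun y => ext_pt y s) f); last exact: f_cont.
by apply: continuous_ext_pt; [apply: continuous_id | apply: continuous_const].
Qed.

Lemma jointly_continuous_ext_pt k (f : Pt k.+1 -> R) :
  cont_everywhere f -> jointly_continuous (fun s y => f (ext_pt y s)).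
Proof.
move=> f_cont s y; apply: (continuous_comp (fun w : R * Pt k => ext_pt w.2 w.1) f).
  by apply: continuous_ext_pt; [apply: continuous_snd | apply: continuous_fst].
exact: f_cont.
Qed.

Lemma jointly_continuous_slice (T : UniformSpace) k (f : T -> Pt k.+1 -> R) s :
  jointly_continuous f -> jointly_continuous (fun z y => f z (ext_pt y s)).
Proof.
move=> f_cont z y; apply: (continuous_comp_2 fst (fun w : T * Pt k => ext_pt w.2 s) f).
- exact: continuous_fst.
- by apply: continuous_ext_pt; [apply: continuous_snd | apply: continuous_const].
- exact: f_cont.
Qed.

Lemma jointly_continuous_param_slice (T : UniformSpace) k (f : T -> Pt k.+1 -> R) :
  jointly_continuous f ->
  jointly_continuous (fun (zs : T * R) (y : Pt k) => f zs.1 (ext_pt y zs.2)).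
Proof.
move=> f_cont [z s] y.
apply: (continuous_comp_2 (fun w : (T * R) * Pt k => w.1.1) (fun w => ext_pt w.2 w.1.2) f).
- by apply: (continuous_comp fst fst); apply: continuous_fst.
- apply: continuous_ext_pt; first exact: continuous_snd.
  by apply: (continuous_comp fst snd); [apply: continuous_fst | apply: continuous_snd].
- exact: f_cont.
Qed.

Lemma continuous_box_int_param M (T : UniformSpace) k (f : T -> Pt k -> R) :
  jointly_continuous f -> forall z, continuous (fun z => box_int M (f z)) z.
Proof.
elim: k T f => [|k IH] T f f_cont z.
  apply: (continuous_comp_2 id (fun _ => fun _ => 0) f); first exact: continuous_id.
    exact: continuous_const.
  exact: f_cont.
apply: continuous_RInt_param => {}z s.
exact: (IH _ _ (jointly_continuous_param_slice f_cont) (z, s)).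
Qed.

Lemma ex_RInt_box_slice M k (f : Pt k.+1 -> R) :
  cont_everywhere f -> ex_RInt (fun s => box_int M (fun y => f (ext_pt y s))) (- M) M.
Proof.
move=> f_cont; apply: ex_RInt_continuous => s _.
exact: continuous_box_int_param (jointly_continuous_ext_pt f_cont) s.
Qed.

Lemma eq_box_int M k (f g : Pt k -> R) :
  (forall x, f x = g x) -> box_int M f = box_int M g.
Proof.
elim: k f g => [|k IH] f g fg //=.
by apply: RInt_ext => s _; apply: IH => y.
Qed.

Lemma box_int0 M k : box_int M (fun _ : Pt k => 0) = 0.
Proof.
elim: k => [|k IH] //=; rewrite (RInt_ext _ (fun _ => 0)) ?RInt_const; last by move=> *.
by rewrite /scal /= /mult /=; ring.
Qed.

Lemma box_intD M k (f g : Pt k -> R) : cont_everywhere f -> cont_everywhere g ->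
  box_int M (fun x => f x + g x) = box_int M f + box_int M g.
Proof.
elim: k f g => [|k IH] f g f_cont g_cont //=.
apply: eq_trans (RInt_plus _ _ _ _ (ex_RInt_box_slice M f_cont) (ex_RInt_box_slice M g_cont)).
by apply: RInt_ext => s _; apply: IH; apply: cont_everywhere_slice.
Qed.

Lemma box_intZ M k c (f : Pt k -> R) : cont_everywhere f ->
  box_int M (fun x => c * f x) = c * box_int M f.
Proof.
elim: k f => [|k IH] f f_cont //=.
apply: eq_trans (RInt_scal _ _ _ _ (ex_RInt_box_slice M f_cont)).
by apply: RInt_ext => s _; apply: IH; apply: cont_everywhere_slice.
Qed.

Lemma box_intB M k (f g : Pt k -> R) : cont_everywhere f -> cont_everywhere g ->
  box_int M (fun x => f x - g x) = box_int M f - box_int M g.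
Proof.
move=> f_cont g_cont.
rewrite (eq_box_int M (g := fun x => f x + -1 * g x)); last by move=> x; ring.
rewrite box_intD // ?box_intZ //; first by ring.
by move=> x; apply: continuous_Rmult; [apply: continuous_const | apply: g_cont].
Qed.

Lemma le_box_int M k (f g : Pt k -> R) : - M <= M ->
  cont_everywhere f -> cont_everywhere g -> (forall x, f x <= g x) ->
  box_int M f <= box_int M g.
Proof.
move=> MM; elim: k f g => [|k IH] f g f_cont g_cont fg //=.
apply: RInt_le => //; try exact: ex_RInt_box_slice.
by move=> s _; apply: IH => //; apply: cont_everywhere_slice.
Qed.

Section BoxSums.
Variables (M : R) (k m : nat) (F : 'I_m -> Pt k -> R).
Hypothesis F_cont : forall l, cont_everywhere (F l).

Lemma cont_everywhere_sum : cont_everywhere (fun x => sumR (fun l => F l x)).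
Proof. by move=> x; apply: continuous_sumR => l; apply: F_cont. Qed.

Lemma box_int_sum :
  box_int M (fun x => sumR (fun l => F l x)) = sumR (fun l => box_int M (F l)).
Proof.
rewrite /sumR; elim: (index_enum _) => [|l r IH].
  by rewrite big_nil -[RHS](box_int0 M k); apply: eq_box_int => x; rewrite big_nil.
rewrite big_cons -IH -box_intD //; last by move=> x; apply: continuous_bigR => l'; apply: F_cont.
by apply: eq_box_int => x; rewrite big_cons.
Qed.

End BoxSums.

Lemma is_derive_box_int_param M k (f df : R -> Pt k -> R) :
  (forall u y, is_derive (fun u => f u y) u (df u y)) ->
  jointly_continuous f -> jointly_continuous df ->
  forall u, is_derive (fun u => box_int M (f u)) u (box_int M (df u)).
Proof.
elim: k f df => [|k IH] f df f_df f_cont df_cont u; first exact: f_df.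
pose G u s := box_int M (fun y => f u (ext_pt y s)).
pose DG u s := box_int M (fun y => df u (ext_pt y s)).
have G_DG u1 s : is_derive (G^~ s) u1 (DG u1 s).
  apply: (IH (fun u y => f u (ext_pt y s)) (fun u y => df u (ext_pt y s))).
  - by move=> u2 y; apply: f_df.
  - exact: jointly_continuous_slice.
  - exact: jointly_continuous_slice.
have DG_cont := continuous_box_int_param (M := M) (jointly_continuous_param_slice df_cont).
have DerivE : (fun u v => Derive (G^~ v) u) = DG.
  apply: functional_extensionality => u1; apply: functional_extensionality => s1.
  exact: is_derive_unique (G_DG u1 s1).
have := is_derive_RInt_param G (- M) M u.
rewrite DerivE (RInt_ext _ (DG u)); last by move=> t _; apply: is_derive_unique.
apply.
- by exists (mkposreal 1 Rlt_0_1) => u' _ s _; exists (DG u' s).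
- by move=> s _; apply/continuity_2d_pt_filterlim; exact: (DG_cont (u, s)).
- exists (mkposreal 1 Rlt_0_1) => u' _; apply: ex_RInt_continuous => s _.
  apply: (continuous_section (f := G)).
  exact: (continuous_box_int_param (M := M) (jointly_continuous_param_slice f_cont) (z := (u', s))).
Qed.

(* In the last coordinate this is the fundamental theorem of calculus, after
   differentiating under the inner integrals; in the others it follows by induction. *)
Lemma box_int_partial_eq0 M k (h : Pt k -> R) (i : 'I_k) :
  cont_everywhere h -> (forall x, ex_partial i h x) -> cont_everywhere (partial i h) ->
  (forall x, x i = M \/ x i = - M -> h x = 0) -> box_int M (partial i h) = 0.
Proof.
elim: k h i => [|k IH] h i h_cont h_ex dh_cont h_faces; first by have := ltn_ord i.
case: (unliftP ord_max i) => [j|] ei; subst i => /=.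
  rewrite (RInt_ext _ (fun _ => 0)) ?RInt_const /scal /= /mult /=; first by ring.
  move=> s _; rewrite (eq_box_int M (g := partial j (fun y => h (ext_pt y s))));
    last by move=> y; apply: partial_lift.
  apply: IH; first exact: cont_everywhere_slice.
  - move=> y; have := h_ex (ext_pt y s); rewrite /ex_partial ext_pt_lift.
    by apply: ex_derive_ext => t; rewrite upd_ext_pt_lift.
  - move=> y; apply: (continuous_ext (fun y => partial (lift ord_max j) h (ext_pt y s))).
      by move=> y'; apply: partial_lift.
    exact: cont_everywhere_slice.
  - by move=> y hy; apply: h_faces; rewrite ext_pt_lift.
pose F u := box_int M (fun y => h (ext_pt y u)).
have F_deriv u : is_derive F u (box_int M (fun y => partial ord_max h (ext_pt y u))).
  apply: (@is_derive_box_int_param M k (fun u y => h (ext_pt y u))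
    (fun u y => partial ord_max h (ext_pt y u))); try exact: jointly_continuous_ext_pt.
  move=> u' y; rewrite partial_max; apply: Derive_correct.
  have := h_ex (ext_pt y u'); rewrite /ex_partial ext_pt_max.
  by apply: ex_derive_ext => t; rewrite upd_ext_pt_max.
have dF_cont u := continuous_box_int_param (M := M) (jointly_continuous_ext_pt dh_cont) u.
rewrite (is_RInt_unique _ _ _ _
  (is_RInt_derive F _ _ _ (fun u _ => F_deriv u) (fun u _ => dF_cont u))).
have F_face s : s = M \/ s = - M -> F s = 0.
  move=> hs; rewrite /F -(box_int0 M k); apply: eq_box_int => y.
  by apply: h_faces; rewrite ext_pt_max.
by rewrite F_face ?F_face /minus /plus /opp /=; [ring | right | left].
Qed.

Section Schwarz.
Variables (k : nat) (g : Pt k -> R) (i j : 'I_k) (x : Pt k).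
Hypothesis ij : i != j.

Let q u w := upd (upd x i u) j w.

Let q_i u w : q u w i = u.
Proof. by rewrite /q upd_neq ?upd_eq // eq_sym. Qed.

Let q_j u w : q u w j = w.
Proof. by rewrite /q upd_eq. Qed.

Let upd_q_i u w z : upd (q u w) i z = q z w.
Proof. by rewrite /q (@upd_comm _ (upd x i u) j i) 1?eq_sym // upd_upd. Qed.

Let upd_q_j u w z : upd (q u w) j z = q u z.
Proof. by rewrite /q upd_upd. Qed.

Let ball_q (d : R) u w : Rabs (u - x i) < d -> Rabs (w - x j) < d -> ball x d (q u w).
Proof.
move=> hu hw l; rewrite /q /upd.
case: eqP => [->|_] //; case: eqP => [->|_] //.
by change (Rabs (x l - x l) < d); rewrite Rminus_diag Rabs_R0; have := Rabs_pos (u - x i); lra.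
Qed.

Let Derive_q_j z w : Derive (fun t => g (q z t)) w = partial j g (q z w).
Proof. by rewrite /partial q_j; apply: Derive_ext => t; rewrite upd_q_j. Qed.

Let Derive_q_i z u : Derive (fun t => g (q t z)) u = partial i g (q u z).
Proof. by rewrite /partial q_i; apply: Derive_ext => t; rewrite upd_q_i. Qed.

Let continuity_2d_q (h : Pt k -> R) : continuous h x ->
  continuity_2d_pt (fun u w => h (q u w)) (x i) (x j).
Proof.
move=> /filterlim_locally hx eps; have [d Hd] := hx eps.
exists d => u w hu hw; rewrite /q !upd_id; exact: (Hd _ (ball_q hu hw)).
Qed.

Lemma partial_comm :
  locally x (fun y => [/\ ex_partial i g y, ex_partial j g y,
                          ex_partial i (partial j g) y & ex_partial j (partial i g) y]) ->
  continuous (partial i (partial j g)) x -> continuous (partial j (partial i g)) x ->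
  partial i (partial j g) x = partial j (partial i g) x.
Proof.
move=> [d Hd] cij cji.
have DD_ij u w :
    Derive (fun z => Derive (fun t => g (q z t)) w) u = partial i (partial j g) (q u w).
  by rewrite /partial q_i; apply: Derive_ext => z; rewrite Derive_q_j upd_q_i.
have DD_ji u w :
    Derive (fun z => Derive (fun t => g (q t z)) u) w = partial j (partial i g) (q u w).
  by rewrite /partial q_j; apply: Derive_ext => z; rewrite Derive_q_i upd_q_j.
have := @Schwarz (fun u w => g (q u w)) (x i) (x j).
rewrite DD_ij DD_ji /q !upd_id; apply.
- exists d => u w hu hw; have [gi gj gji gij] := Hd _ (ball_q hu hw).
  split; [|split; [|split]].
  + by move: gi; rewrite /ex_partial q_i; apply: ex_derive_ext => z; rewrite upd_q_i.
  + by move: gj; rewrite /ex_partial q_j; apply: ex_derive_ext => z; rewrite upd_q_j.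
  + move: gji; rewrite /ex_partial q_i; apply: ex_derive_ext => z.
    by rewrite Derive_q_j upd_q_i.
  + move: gij; rewrite /ex_partial q_j; apply: ex_derive_ext => z.
    by rewrite Derive_q_i upd_q_j.
- by apply: (continuity_2d_pt_ext _ _ _ _ (fun u w => esym (DD_ij u w))); apply: continuity_2d_q.
- by apply: (continuity_2d_pt_ext _ _ _ _ (fun u w => esym (DD_ji u w))); apply: continuity_2d_q.
Qed.

End Schwarz.

Section SmoothFunctions.
Variables (k : nat) (U : Pt k -> Prop) (v : Pt k -> R).
Hypotheses (U_open : open_Rn U) (v_smooth : smooth_on U v).

Lemma open_locally x : U x -> locally x U.
Proof. by move=> /U_open [d [d0 Hd]]; exists (mkposreal d d0) => y /Hd. Qed.

Lemma smooth_continuous l x : U x -> continuous (iter_partial l v) x.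
Proof. by move=> Ux; apply/cont_atE; case: (v_smooth l Ux). Qed.

Lemma smooth_is_partial l i x : U x ->
  is_partial i (iter_partial l v) x (iter_partial (i :: l) v x).
Proof. by move=> Ux; apply: ex_partial_correct; case: (v_smooth l Ux) => _; apply. Qed.

Lemma smooth_partial_comm l i j x : U x ->
  iter_partial (i :: j :: l) v x = iter_partial (j :: i :: l) v x.
Proof.
move=> Ux; case: (eqVneq i j) => [-> //|ij].
apply: (partial_comm (g := iter_partial l v) ij _
  (smooth_continuous (l := [:: i, j & l]) Ux) (smooth_continuous (l := [:: j, i & l]) Ux)).
have := open_locally Ux; apply: filter_imp => y Uy.
split; apply: is_partial_ex;
  [ exact: smooth_is_partial l i y Uy | exact: smooth_is_partial l j y Uy
  | exact: smooth_is_partial [:: j & l] i y Uy | exact: smooth_is_partial [:: i & l] j y Uy ].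
Qed.

Lemma hess_sym x i j : U x -> hess v x i j = hess v x j i.
Proof. exact: smooth_partial_comm [::] i j x. Qed.

Lemma partial3_comm x i j : U x ->
  iter_partial [:: j; i; i] v x = iter_partial [:: i; i; j] v x.
Proof.
move=> Ux; rewrite (smooth_partial_comm [:: i] j i Ux) /=.
rewrite /partial; apply: Derive_ext_loc.
have [d Hd] := open_locally Ux.
exists d => t /= xt; apply: (smooth_partial_comm [::] j i); apply: Hd.
by apply: ball_upd; [exact: cond_pos | exact: xt].
Qed.

End SmoothFunctions.

Section LocallyZero.
Variables (k : nat) (h : Pt k -> R).

Lemma locally_zero_continuous y : locally y (fun z => h z = 0) -> continuous h y.
Proof.
move=> h0; apply: (continuous_ext_loc _ (fun _ => 0)); last exact: continuous_const.
by move: h0; apply: filter_imp => z ->.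
Qed.

Lemma locally_zero_is_partial i y : locally y (fun z => h z = 0) -> is_partial i h y 0.
Proof.
move=> [d Hd]; apply: (is_derive_ext_loc (fun _ => 0)); last exact: is_derive_const.
by exists d => t /= yt; rewrite Hd //; apply: ball_upd; [apply: cond_pos | apply: yt].
Qed.

Lemma locally_zero_partial i y :
  locally y (fun z => h z = 0) -> locally y (fun z => partial i h z = 0).
Proof.
move=> /locally_locally; apply: filter_imp => z /(locally_zero_is_partial i).
exact: is_partial_unique.
Qed.

End LocallyZero.

Section RegularizedSolution.
Variables (n : nat) (p eps : R) (U : Pt n -> Prop) (v : Pt n -> R).
Hypotheses (eps_gt0 : 0 < eps) (v_smooth : smooth_on U v).

Definition aeps y := norm2 (grad v y) + eps.
Definition grad_hess_grad y := sumR (fun i => partial i v y * hess_grad v y i).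

Lemma aeps_gt0 y : 0 < aeps y.
Proof. by have := norm2_ge0 (grad v y); rewrite /aeps; lra. Qed.

Lemma is_partial_aeps i y : U y -> is_partial i aeps y (2 * hess_grad v y i).
Proof.
move=> Uy.
have := is_partial_plus (is_partial_sum (D := fun l => hess v y i l * partial l v y
    + partial l v y * hess v y i l) (fun l => is_partial_mult
    (smooth_is_partial v_smooth [:: l] i Uy) (smooth_is_partial v_smooth [:: l] i Uy)))
  (is_partial_const i eps y).
rewrite Rplus_0_r /hess_grad -sumR_mull.
by rewrite (eq_sumR (G := fun l => 2 * (hess v y i l * partial l v y))) // => l; ring.
Qed.

Lemma continuous_aeps y : U y -> continuous aeps y.
Proof.
move=> Uy; apply: continuous_Rplus; last exact: continuous_const.
apply: continuous_sumR => l.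
by apply: continuous_Rmult; apply: (smooth_continuous (l := [:: l]) v_smooth Uy).
Qed.

Hypothesis v_sol : reg_plap_sol p eps U v.

(* Expanding the divergence, every term carries the positive factor
   [aeps^((p-2)/2 - 1)], which cancels. *)
Lemma reg_plap_nondiv y : U y ->
  aeps y * laplacian v y = - (p - 2) * grad_hess_grad y.
Proof.
move=> Uy.
have sol : sumR (fun i => partial i (fun y => Rpower (aeps y) ((p - 2) / 2) * partial i v y) y) = 0.
  exact: v_sol Uy.
set q := Rpower (aeps y) ((p - 2) / 2 - 1).
have q_gt0 : 0 < q by apply: exp_pos.
have flux i : partial i (fun y => Rpower (aeps y) ((p - 2) / 2) * partial i v y) y =
    q * ((p - 2) * (partial i v y * hess_grad v y i) + aeps y * hess v y i i).
  rewrite (is_partial_unique (is_partial_mult (is_partial_Rpower ((p - 2) / 2) (aeps_gt0 y)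
    (is_partial_aeps i Uy)) (smooth_is_partial v_smooth [:: i] i Uy))) /hess /= -/q.
  have -> : Rpower (aeps y) ((p - 2) / 2) = q * aeps y.
    by rewrite /q -{3}(Rpower_1 (aeps y) (aeps_gt0 y)) -Rpower_plus; congr Rpower; ring.
  by field.
rewrite (eq_sumR flux) sumR_mull sumRD !sumR_mull in sol.
by have := Rmult_integral _ _ sol; rewrite /laplacian /grad_hess_grad; case; lra.
Qed.

End RegularizedSolution.

Section Caccioppoli.
Variables (n : nat) (r eps : R) (U : Pt n -> Prop) (v phi : Pt n -> R).
Hypotheses (U_open : open_Rn U) (eps_gt0 : 0 < eps) (v_smooth : smooth_on U v)
  (phi_test : test_fun U phi).

Definition weight y := Rpower (aeps eps v y) r.
Definition cutoff y := weight y * (phi y * phi y).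
(* [div_fields] is div((Δv Dv - D^2v Dv) w phi^2). *)
Definition flux (a b c : 'I_n) y := hess v y a b * partial c v y * cutoff y.
Definition div_fields y :=
  sumR (fun i => sumR (fun j => partial j (flux i i j) y - partial i (flux i j j) y)).

Definition dcutoff i y :=
  r * Rpower (aeps eps v y) (r - 1) * (2 * hess_grad v y i) * (phi y * phi y)
  + weight y * (partial i phi y * phi y + phi y * partial i phi y).

Let v_cont l y (Uy : U y) : continuous (iter_partial l v) y := smooth_continuous v_smooth Uy.
Let phi_cont l y : continuous (iter_partial l phi) y := smooth_continuous phi_test.1 (I : True).

Lemma weight_gt0 y : 0 < weight y.
Proof. exact: exp_pos. Qed.

Lemma is_partial_cutoff i y : U y -> is_partial i cutoff y (dcutoff i y).
Proof.
move=> Uy; rewrite /cutoff /weight; apply: is_partial_mult.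
  by apply: is_partial_Rpower; [apply: aeps_gt0 | exact: (is_partial_aeps eps v_smooth i Uy)].
by apply: is_partial_mult; apply: (smooth_is_partial phi_test.1 [::]).
Qed.

Lemma is_partial_flux a b c d y : U y -> is_partial d (flux a b c) y
  ((iter_partial [:: d; a; b] v y * partial c v y + hess v y a b * hess v y d c) * cutoff y
   + hess v y a b * partial c v y * dcutoff d y).
Proof.
move=> Uy; apply: is_partial_mult; last exact: is_partial_cutoff.
apply: is_partial_mult; first exact: (smooth_is_partial v_smooth [:: a; b] d Uy).
exact: (smooth_is_partial v_smooth [:: c] d Uy).
Qed.

Lemma continuous_weight y : U y -> continuous weight y.
Proof.
by move=> Uy; apply: continuous_Rpower; [apply: aeps_gt0 | exact: (continuous_aeps v_smooth Uy)].
Qed.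

Lemma continuous_cutoff y : U y -> continuous cutoff y.
Proof.
move=> Uy; apply: continuous_Rmult; first exact: continuous_weight.
by apply: continuous_Rmult; apply: (phi_cont (l := [::])).
Qed.

Lemma continuous_dcutoff i y : U y -> continuous (dcutoff i) y.
Proof.
move=> Uy; apply: continuous_Rplus; apply: continuous_Rmult.
- apply: continuous_Rmult; first apply: continuous_Rmult; first exact: continuous_const.
    by apply: continuous_Rpower; [apply: aeps_gt0 | exact: (continuous_aeps v_smooth Uy)].
  apply: continuous_Rmult; first exact: continuous_const.
  apply: continuous_sumR => j; apply: continuous_Rmult.
    exact: (v_cont (l := [:: i; j]) Uy).
  exact: (v_cont (l := [:: j]) Uy).
- by apply: continuous_Rmult; apply: (phi_cont (l := [::])).
- exact: continuous_weight.
- apply: continuous_Rplus; apply: continuous_Rmult;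
    [exact: (phi_cont (l := [:: i])) | exact: (phi_cont (l := [::]))
    | exact: (phi_cont (l := [::])) | exact: (phi_cont (l := [:: i]))].
Qed.

Definition hess_norm2 y := dsum (fun i j => hess v y i j * hess v y i j).
Definition grad_dot_phi y := sumR (fun i => partial i v y * partial i phi y).
Definition hess_grad_dot_phi y := sumR (fun i => hess_grad v y i * partial i phi y).

Lemma div_fields_eq y : U y -> div_fields y =
  (laplacian v y ^ 2 - hess_norm2 y) * weight y * phi y ^ 2
  + (2 * r) * (weight y / aeps eps v y) * phi y ^ 2
    * (laplacian v y * grad_hess_grad v y - norm2 (hess_grad v y))
  + 2 * weight y * phi y * (laplacian v y * grad_dot_phi y - hess_grad_dot_phi y).
Proof.
move=> Uy.
set L := laplacian v y; set w := weight y; set ph := phi y; set a := aeps eps v y.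
set c := r * Rpower a (r - 1) * 2 * (ph * ph).
have dcutoffE j : dcutoff j y = c * hess_grad v y j + (2 * w * ph) * partial j phi y.
  by rewrite /dcutoff /c -/a -/w -/ph; ring.
have -> : div_fields y = dsum (fun i j => hess v y i i * (hess v y j j * cutoff y)
    + (- cutoff y) * (hess v y i j * hess v y i j)
    + hess v y i i * (partial j v y * dcutoff j y)
    + (-1) * (dcutoff i y * (hess v y i j * partial j v y))).
  apply: eq_sumR => i; apply: eq_sumR => j.
  rewrite !(is_partial_unique (is_partial_flux _ _ _ _ Uy)) (partial3_comm U_open v_smooth i j Uy).
  by ring.
rewrite !dsumD !dsum_mull !dsum_prod sumR_mulr -/(hess_norm2 y).
rewrite (_ : sumR (fun i => hess v y i i) = L) //.
have -> : sumR (fun j => partial j v y * dcutoff j y) =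
    c * grad_hess_grad v y + (2 * w * ph) * grad_dot_phi y.
  rewrite /grad_hess_grad /grad_dot_phi -!sumR_mull -sumRD.
  by apply: eq_sumR => j; rewrite dcutoffE; ring.
have -> : dsum (fun i j => dcutoff i y * (hess v y i j * partial j v y)) =
    c * norm2 (hess_grad v y) + (2 * w * ph) * hess_grad_dot_phi y.
  rewrite /dsum /norm2 /hess_grad_dot_phi -!sumR_mull -sumRD; apply: eq_sumR => i.
  by rewrite sumR_mull dcutoffE /hess_grad; ring.
rewrite /c; have -> : Rpower a (r - 1) = w / a.
  by rewrite /w /weight -/a /Rminus Rpower_plus Rpower_Ropp Rpower_1 //; apply: aeps_gt0.
by rewrite /cutoff -/w -/ph; ring.
Qed.

Lemma U_or_phi_vanishes y : U y \/ locally y (fun z => phi z = 0).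
Proof.
case: (classic (U y)) => Uy; [by left | right].
have [B [d [d0 Hd]]] := phi_test.2.
exists (mkposreal d d0) => z yz; apply: NNPP => phiz.
by apply: Uy; apply: (Hd z phiz).2 => j; rewrite Rabs_minus_sym; apply: yz.
Qed.

Lemma cont_everywhere_supported (h : Pt n -> R) :
  (forall y, U y -> continuous h y) ->
  (forall y, locally y (fun z => phi z = 0) -> locally y (fun z => h z = 0)) ->
  cont_everywhere h.
Proof.
move=> h_cont h_near y; case: (U_or_phi_vanishes y) => [|/h_near]; first exact: h_cont.
exact: locally_zero_continuous.
Qed.

Lemma C1_of_cutoff (h dh : Pt n -> R) i :
  (forall z, phi z = 0 -> h z = 0) ->
  (forall y, U y -> continuous h y) -> (forall y, U y -> is_partial i h y (dh y)) ->
  (forall y, U y -> continuous dh y) ->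
  [/\ cont_everywhere h, forall x, ex_partial i h x & cont_everywhere (partial i h)].
Proof.
move=> h0 h_cont h_der dh_cont.
have h_near y : locally y (fun z => phi z = 0) -> locally y (fun z => h z = 0).
  by apply: filter_imp => z /h0.
split.
- exact: cont_everywhere_supported.
- move=> y; case: (U_or_phi_vanishes y) => [Uy | /h_near hy].
    exact: is_partial_ex (h_der _ Uy).
  exact: is_partial_ex (locally_zero_is_partial i hy).
- apply: cont_everywhere_supported => y; last by move=> /h_near; apply: locally_zero_partial.
  move=> Uy; apply: (continuous_ext_loc _ dh); last exact: dh_cont.
  have := open_locally U_open Uy; apply: filter_imp => z Uz.
  by rewrite (is_partial_unique (h_der _ Uz)).
Qed.

Lemma flux_C1 a b c d : [/\ cont_everywhere (flux a b c),
  forall x, ex_partial d (flux a b c) x & cont_everywhere (partial d (flux a b c))].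
Proof.
have hess_cont y : U y -> continuous (fun y => hess v y a b * partial c v y) y.
  move=> Uy; apply: continuous_Rmult; first exact: (v_cont (l := [:: a; b]) Uy).
  exact: (v_cont (l := [:: c]) Uy).
apply: C1_of_cutoff => [z phi0 | y Uy | y Uy | y Uy].
- by rewrite /flux /cutoff phi0; ring.
- by apply: continuous_Rmult; [apply: hess_cont | exact: continuous_cutoff].
- exact: is_partial_flux.
- apply: continuous_Rplus; apply: continuous_Rmult; try exact: continuous_cutoff;
    try exact: continuous_dcutoff; last exact: hess_cont.
  apply: continuous_Rplus; apply: continuous_Rmult.
  + exact: (v_cont (l := [:: d; a; b]) Uy).
  + exact: (v_cont (l := [:: c]) Uy).
  + exact: (v_cont (l := [:: a; b]) Uy).
  + exact: (v_cont (l := [:: d; c]) Uy).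
Qed.

Variable M : R.
Hypothesis phi_supp : forall x, phi x <> 0 -> forall i, Rabs (x i) <= M.

Lemma phi_faces x i : x i = M \/ x i = - M -> phi x = 0.
Proof.
move=> xi; apply: NNPP => phix.
have [d Hd] : locally x (fun z => phi z <> 0).
  have /filterlim_locally/(_ (mkposreal _ (Rabs_pos_lt _ phix))) := phi_cont (l := [::]) (y := x).
  apply: filter_imp => z /= + phiz; rewrite phiz.
  by change (Rabs (0 - phi x) < Rabs (phi x) -> False); rewrite Rminus_0_l Rabs_Ropp; lra.
have near_M t : Rabs (t - x i) < d -> Rabs t <= M.
  by move=> xt; have := phi_supp (Hd _ (ball_upd (cond_pos d) xt)) i; rewrite upd_eq.
have xM := phi_supp phix i; have d0 := cond_pos d.
have [x0|x0] := Rle_or_lt 0 (x i).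
  by have := near_M (x i + d / 2); case: xi => xi; move: xM x0; rewrite xi; split_Rabs; lra.
by have := near_M (x i - d / 2); case: xi => xi; move: xM x0; rewrite xi; split_Rabs; lra.
Qed.

Lemma cont_everywhere_div_field i j :
  cont_everywhere (fun y => partial j (flux i i j) y - partial i (flux i j j) y).
Proof.
have [_ _ c1] := flux_C1 i i j j; have [_ _ c2] := flux_C1 i j j i.
by move=> y; apply: continuous_Rminus.
Qed.

Lemma div_fields_vanishes y : locally y (fun z => phi z = 0) -> div_fields y = 0.
Proof.
move=> phi0; rewrite -(sumR0 n); apply: eq_sumR => i; rewrite -(sumR0 n); apply: eq_sumR => j.
have field0 (f : Pt n -> R) l : (forall z, phi z = 0 -> f z = 0) -> partial l f y = 0.
  move=> f0; apply: (locally_singleton y (fun z => partial l f z = 0)).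
  apply: locally_zero_partial.
  by move: phi0; apply: filter_imp => z /f0.
by rewrite !field0 ?Rminus_0_r // => z phiz; rewrite /flux /cutoff phiz; ring.
Qed.

Lemma box_int_div_fields : box_int M div_fields = 0.
Proof.
rewrite /div_fields box_int_sum; last first.
  by move=> i; apply: cont_everywhere_sum; apply: cont_everywhere_div_field.
rewrite -[RHS](sumR0 n); apply: eq_sumR => i.
rewrite box_int_sum; last exact: cont_everywhere_div_field.
rewrite -[RHS](sumR0 n); apply: eq_sumR => j.
have [c1 e1 dc1] := flux_C1 i i j j; have [c2 e2 dc2] := flux_C1 i j j i.
have faces a b c x l : x l = M \/ x l = - M -> flux a b c x = 0.
  by move=> /phi_faces phi0; rewrite /flux /cutoff phi0; ring.
by rewrite box_intB // !box_int_partial_eq0 ?Rminus_0_r // => x; apply: faces.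
Qed.

Definition hess_term y :=
  norm2 (hess_grad v y) / (norm2 (grad v y) + eps) * weight y * phi y ^ 2.
Definition lap_term y := laplacian v y ^ 2 * weight y * phi y ^ 2.
Definition grad_phi_term y := Rpower (aeps eps v y) (r + 1) * norm2 (grad phi y).

Variable p : R.
Hypotheses (v_sol : reg_plap_sol p eps U v) (n_ge2 : (2 <= n)%nat).
Hypotheses (k_gt : -1 < p - 2) (g_gt : - (INR n - 1 + 1) < 2 * r * (INR n - 1))
  (coer1_gt0 : 0 < coer (INR n - 1) (p - 2) (2 * r) 1).

Let m := INR n - 1.
Let c := coer_const m (p - 2) (2 * r).

Let m_ge1 : 1 <= m := INR_pred_ge1 n_ge2.

Lemma pointwise_energy y :
  c / 2 * (hess_term y + lap_term y) <= - div_fields y + 4 / c * grad_phi_term y.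
Proof.
case: (U_or_phi_vanishes y) => [Uy | phi0]; last first.
  have grad0 : norm2 (grad phi y) = 0.
    rewrite -(sumR0 n); apply: eq_sumR => i.
    by rewrite /grad (locally_singleton _ _ (locally_zero_partial i phi0)); ring.
  have phiy := locally_singleton _ _ phi0.
  rewrite /hess_term /lap_term /grad_phi_term (div_fields_vanishes phi0) grad0 phiy.
  by apply: Req_le; ring.
have -> : grad_phi_term y = weight y * (norm2 (grad v y) + eps) * norm2 (grad phi y).
  by rewrite /grad_phi_term Rpower_plus Rpower_1 //; apply: aeps_gt0.
rewrite (div_fields_eq Uy).
have grad0 : norm2 (grad v y) = 0 -> forall i, hess_grad v y i = 0.
  move=> /norm2_eq0 g0 i; rewrite -(sumR0 n); apply: eq_sumR => j.
  by have := g0 j; rewrite /grad => ->; ring.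
apply: (pointwise_energy_bound m_ge1 k_gt g_gt coer1_gt0).
- exact: norm2_ge0.
- exact: eps_gt0.
- exact: dsum_ge0 (fun i j => Rle_0_sqr _).
- exact (reg_plap_nondiv eps_gt0 v_smooth v_sol Uy).
- exact: cauchy_schwarz.
- move=> /grad0 hg0; rewrite /grad_hess_grad /norm2 -(sumR0 n); split; apply: eq_sumR => i;
    by rewrite hg0; ring.
- exact: sym_frobenius_lb (fun i j => hess_sym U_open v_smooth i j Uy) n_ge2.
- exact: norm2_ge0.
- exact: weight_gt0.
- exact: norm2_ge0.
- exact: cauchy_schwarz.
- exact: cauchy_schwarz.
Qed.

Lemma terms_vanish y : locally y (fun z => phi z = 0) ->
  [/\ hess_term y = 0, lap_term y = 0 & grad_phi_term y = 0].
Proof.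
move=> phi0; have phiy := locally_singleton _ _ phi0.
split; rewrite /hess_term /lap_term /grad_phi_term ?phiy; try ring.
rewrite /norm2 (eq_sumR (G := fun _ => 0)) ?sumR0; first ring.
by move=> i; rewrite /grad (locally_singleton _ _ (locally_zero_partial i phi0)); ring.
Qed.

Lemma cont_everywhere_terms :
  [/\ cont_everywhere hess_term, cont_everywhere lap_term, cont_everywhere grad_phi_term
    & cont_everywhere div_fields].
Proof.
have hess_grad_cont i y : U y -> continuous (fun y => hess_grad v y i) y.
  move=> Uy; apply: continuous_sumR => j; apply: continuous_Rmult.
    exact: (v_cont (l := [:: i; j]) Uy).
  exact: (v_cont (l := [:: j]) Uy).
have sq_cont (f : Pt n -> R) y : continuous f y -> continuous (fun y => f y ^ 2) y.
  move=> fy; apply: (continuous_ext (fun y => f y * f y)); first by move=> z; rewrite /= Rmult_1_r.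
  exact: continuous_Rmult.
have supp (h : Pt n -> R) : (forall y, locally y (fun z => phi z = 0) -> h y = 0) ->
    (forall y, U y -> continuous h y) -> cont_everywhere h.
  move=> h0 h_cont; apply: cont_everywhere_supported => // y /locally_locally.
  by apply: filter_imp => z /h0.
have phi2_cont y : continuous (fun y => phi y ^ 2) y := sq_cont _ _ (phi_cont (l := [::]) (y := y)).
split.
- apply: supp => [y /terms_vanish [] // | y Uy].
  apply: continuous_Rmult => //; apply: continuous_Rmult; last exact: continuous_weight.
  apply: continuous_Rmult.
    by apply: continuous_sumR => i; apply: continuous_Rmult; apply: hess_grad_cont.
  apply: continuous_Rinv_comp; first by apply: Rgt_not_eq; apply: aeps_gt0.
  exact: (continuous_aeps v_smooth Uy).
- apply: supp => [y /terms_vanish [] // | y Uy].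
  apply: continuous_Rmult => //; apply: continuous_Rmult; last exact: continuous_weight.
  by apply: sq_cont; apply: continuous_sumR => i; exact: (v_cont (l := [:: i; i]) Uy).
- apply: supp => [y /terms_vanish [] // | y Uy].
  apply: continuous_Rmult.
    by apply: continuous_Rpower; [apply: aeps_gt0 | exact: (continuous_aeps v_smooth Uy)].
  by apply: continuous_sumR => i; apply: continuous_Rmult; exact: (phi_cont (l := [:: i])).
- by apply: cont_everywhere_sum => i; apply: cont_everywhere_sum; apply: cont_everywhere_div_field.
Qed.


Lemma phi_eq0_of_neg_bound : M < 0 -> forall x, phi x = 0.
Proof.
move=> M0 x; apply: NNPP => phix.
have := phi_supp phix (Ordinal (leq_trans (isT : (0 < 2)%nat) n_ge2)).
by have := Rabs_pos (x (Ordinal (leq_trans (isT : (0 < 2)%nat) n_ge2))); lra.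
Qed.

Lemma energy_estimate :
  box_int M hess_term + box_int M lap_term <= 8 / (c * c) * box_int M grad_phi_term.
Proof.
have c0 : 0 < c := coer_const_gt0 m_ge1 g_gt coer1_gt0.
have [hess_cont lap_cont gphi_cont div_cont] := cont_everywhere_terms.
have [MM|M0] := Rle_or_lt (- M) M; last first.
  have vanish x : [/\ hess_term x = 0, lap_term x = 0 & grad_phi_term x = 0].
    apply: terms_vanish; exists (mkposreal 1 Rlt_0_1) => z _.
    by apply: phi_eq0_of_neg_bound; lra.
  rewrite !(eq_box_int M (g := fun _ => 0)) ?box_int0; try by move=> x; case: (vanish x).
  by apply: Req_le; ring.
have scal_cont (f : Pt n -> R) a : cont_everywhere f -> cont_everywhere (fun y => a * f y).
  by move=> f_cont y; apply: continuous_Rmult; [apply: continuous_const | apply: f_cont].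
have sum_cont : cont_everywhere (fun y => hess_term y + lap_term y).
  by move=> y; apply: continuous_Rplus.
have gphi4_cont := scal_cont _ (4 / c) gphi_cont.
have := le_box_int MM (scal_cont _ (c / 2) sum_cont)
  (fun y => continuous_Rminus (gphi4_cont y) (div_cont y))
  (fun y => Rle_trans _ _ _ (pointwise_energy y) (Req_le _ _ (Rplus_comm _ _))).
rewrite box_intB // !box_intZ // box_intD // box_int_div_fields.
move=> le_int.
have -> : 8 / (c * c) * box_int M grad_phi_term = 2 / c * (4 / c * box_int M grad_phi_term - 0).
  by field; lra.
have -> : box_int M hess_term + box_int M lap_term =
    2 / c * (c / 2 * (box_int M hess_term + box_int M lap_term)) by field; lra.
by apply: Rmult_le_compat_l => //; apply: Rlt_le; apply: Rdiv_lt_0_compat; lra.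
Qed.

End Caccioppoli.

Lemma gamma_np_conditions n p gamma : (2 <= n)%nat -> 1 < p -> gamma < gamma_np n p ->
  - (INR n - 1 + 1) < 2 * ((p - gamma) / 2) * (INR n - 1) /\
  0 < coer (INR n - 1) (p - 2) (2 * ((p - gamma) / 2)) 1.
Proof.
move=> n2 p1; rewrite /gamma_np; have m1 := INR_pred_ge1 n2; set m := INR n - 1 in m1 *.
have -> : INR n = m + 1 by rewrite /m; ring.
move=> /Rmin_Rgt [g1 g2]; split.
  have : - ((m + 1) / m) * m < (p - gamma) * m by apply: Rmult_lt_compat_r; lra.
  have -> : - ((m + 1) / m) * m = - (m + 1) by field; lra.
  by have -> : 2 * ((p - gamma) / 2) * m = (p - gamma) * m by field.
rewrite /coer; have -> : 1 + (1 + (p - 2) * 1) ^ 2 / m - (p - 2) ^ 2 * 1 ^ 2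
    + 2 * ((p - gamma) / 2) * 1 * (1 + (p - 2) * 1) = (p - 1) * (3 + (p - 1) / m - gamma).
  by field; lra.
by apply: Rmult_lt_0_compat; lra.
Qed.

Theorem lemma3p2 (n : nat) (p gamma : R) :
  (2 <= n)%nat ->
  (1 < p < 2 \/ 2 < p)%R ->
  (gamma < gamma_np n p)%R ->
  exists C : R, (0 <= C)%R /\
    forall (U : Pt n -> Prop) (eps : R) (v phi : Pt n -> R) (M : R),
      open_Rn U -> bounded_Rn U ->
      (0 < eps <= 1)%R ->
      smooth_on U v ->
      reg_plap_sol p eps U v ->
      test_fun U phi ->
      (forall x, phi x <> 0%R -> forall i, (Rabs (x i) <= M)%R) ->
      (box_int M (fun x =>
          norm2 (hess_grad v x) / (norm2 (grad v x) + eps)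
          * Rpower (norm2 (grad v x) + eps) ((p - gamma) / 2) * (phi x)^2)
       + box_int M (fun x =>
          (laplacian v x)^2
          * Rpower (norm2 (grad v x) + eps) ((p - gamma) / 2) * (phi x)^2)
       <= C * box_int M (fun x =>
          Rpower (norm2 (grad v x) + eps) ((p - gamma + 2) / 2)
          * norm2 (grad phi x)))%R.
Proof.
move=> n2 hp hg.
have p1 : 1 < p by case: hp; lra.
have [g_gt coer1_gt0] := gamma_np_conditions n2 p1 hg.
set c := coer_const (INR n - 1) (p - 2) (2 * ((p - gamma) / 2)).
have c0 : 0 < c := coer_const_gt0 (INR_pred_ge1 n2) g_gt coer1_gt0.
exists (8 / (c * c)); split; first by apply: Rlt_le; apply: Rdiv_lt_0_compat; nra.
move=> U eps v phi M U_open _ [eps_gt0 _] v_smooth v_sol phi_test phi_supp.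
rewrite [X in _ <= _ * X](eq_box_int M (g := grad_phi_term ((p - gamma) / 2) eps v phi));
  last first.
  by move=> x; rewrite /grad_phi_term (_ : (p - gamma + 2) / 2 = (p - gamma) / 2 + 1) //; field.
have k_gt : -1 < p - 2 by lra.
exact: (energy_estimate U_open eps_gt0 v_smooth phi_test phi_supp v_sol n2 k_gt g_gt coer1_gt0).
Qed.
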